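(* Let $f$ satisfy the hypotheses of Theorem 1 (bounded below by $f^*$, smooth with constants $L_1,\dots,L_d$, $\bar L=\frac1d\sum_iL_i$), and suppose that at every $x$ the estimator $\hat g(x)$ is unbiased and each coordinate $\hat g_i(x)$ has a unimodal distribution symmetric about $g_i(x)$ with variance $\sigma_i^2(x)$. Run signSGD $x_{k+1}=x_k-\gamma\,\mathrm{sign}\,\hat g(x_k)$ for $K\ge1$ iterations with constant step $\gamma=\sqrt{\frac{2(f(x_0)-f^* )}{d\bar LK}}$ (assume $f(x_0)>f^*$). Writing $g_k=\nabla f(x_k)$, $\sigma_i=\sigma_i(x_k)$ and $H_k=\{i:\sigma_i<\frac{\sqrt3}{2}|g_{k,i}|\}$, one has $$\frac1K\sum_{k=0}^{K-1}\mathbb{E}\left[\sum_{i\in H_k}|g_{k,i}|+\sum_{i\notin H_k}\frac{g_{k,i}^2}{\sigma_i}\right]\le5\sqrt{\frac{d\bar L(f(x_0)-f^* )}{K}}.$$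
   Context: $\mathrm{sign}\,t=1,0,-1$ for $t>0,t=0,t<0$, entrywise. Convention: a term $g_{k,i}^2/\sigma_i$ with $g_{k,i}=\sigma_i=0$ is taken to be $0$. *)

From HB Require Import structures.
From mathcomp Require Import all_boot all_order all_algebra.
From mathcomp Require Import all_classical all_reals all_analysis.
Set Implicit Arguments. Unset Strict Implicit. Unset Printing Implicit Defensive.
Import Order.TTheory GRing.Theory Num.Theory.
Import numFieldNormedType.Exports.
Local Open Scope classical_set_scope.
Local Open Scope ring_scope.

Definition grad {R : realType} {d : nat} (f : 'rV[R]_d -> R) (x : 'rV[R]_d)
  : 'rV[R]_d := \row_i ('d f x (delta_mx 0 i)).

Definition coord_smooth {R : realType} {d : nat} (f : 'rV[R]_d -> R)
  (L : 'I_d -> R) :=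
  forall x y : 'rV[R]_d,
    `| f y - (f x + \sum_i grad f x 0 i * (y 0 i - x 0 i)) |
      <= 2^-1 * \sum_i L i * (y 0 i - x 0 i) ^+ 2.

Definition cdfR {dT} {T : measurableType dT} {R : realType}
  (P : probability T R) (X : T -> R) (t : R) : R :=
  fine (P [set w | X w <= t]).

Definition symmetric_about {dT} {T : measurableType dT} {R : realType}
  (P : probability T R) (X : T -> R) (m : R) :=
  forall t : R, P [set w | X w <= m - t] = P [set w | m + t <= X w].

(* Unimodal about m (Khintchine): the cdf is convex on (-oo, m) and
   concave on (m, +oo). *)
Definition unimodal_about {dT} {T : measurableType dT} {R : realType}
  (P : probability T R) (X : T -> R) (m : R) :=
  (forall a b l : R, a < m -> b < m -> 0 <= l <= 1 ->
     cdfR P X (l * a + (1 - l) * b)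
       <= l * cdfR P X a + (1 - l) * cdfR P X b) /\
  (forall a b l : R, m < a -> m < b -> 0 <= l <= 1 ->
     l * cdfR P X a + (1 - l) * cdfR P X b
       <= cdfR P X (l * a + (1 - l) * b)).

Definition sgv {R : realType} {d : nat} (v : 'rV[R]_d) : 'rV[R]_d :=
  map_mx Num.sg v.

(* One step of signSGD as a Markov transition operator on nonnegative
   observables: (step h)(x) = E[ h(x - gamma * sign ghat(x)) ], the noise
   of the oracle being drawn afresh (from P) at each iteration. *)
Definition signsgd_step {dT} {T : measurableType dT} {R : realType} {d : nat}
  (P : probability T R) (ghat : 'rV[R]_d -> T -> 'rV[R]_d) (gamma : R)
  (h : 'rV[R]_d -> \bar R) (x : 'rV[R]_d) : \bar R :=
  (\int[P]_w h (x - gamma *: sgv (ghat x w))%R)%E.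

Definition signsgd_expect {dT} {T : measurableType dT} {R : realType} {d : nat}
  (P : probability T R) (ghat : 'rV[R]_d -> T -> 'rV[R]_d) (gamma : R)
  (k : nat) (h : 'rV[R]_d -> \bar R) (x0 : 'rV[R]_d) : \bar R :=
  iter k (signsgd_step P ghat gamma) h x0.

(* The per-iterate quantity
   sum_{i in H} |g_i| + sum_{i notin H} g_i^2 / sigma_i,
   H = {i : sigma_i < sqrt 3 / 2 * |g_i|}  (0/0 = 0 since 0^-1 = 0). *)
Definition signsgd_measure {R : realType} {d : nat}
  (g sigma : 'rV[R]_d -> 'rV[R]_d) (x : 'rV[R]_d) : R :=
  \sum_(i < d)
    (if sigma x 0 i < Num.sqrt 3 / 2 * `|g x 0 i|
     then `|g x 0 i|
     else (g x 0 i) ^+ 2 / sigma x 0 i).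

(* Each coordinate of [sign ghat] takes only the values -1, 0, 1, so one step of
   signSGD is a finite Markov kernel and E[h(x_k)] stays a finite real number.
   Coordinatewise smoothness gives the one-step descent
   E f(x_{k+1}) <= f(x_k) - gamma * sum_i g_i (P(ghat_i > 0) - P(ghat_i < 0))
                  + gamma^2 d Lbar / 2.
   For ghat_i symmetric and unimodal about g_i with deviation sigma_i, the
   i-th term of that sum is at least |g_i| (1 - 2 P(ghat_i <= g_i - |g_i|)).
   Chebyshev's inequality bounds this tail when |g_i| >= 2 sigma_i; otherwise
   convexity of the cdf below the mode interpolates between the tail at
   g_i - 2 sigma_i (Chebyshev) and the trivial bound 1/2 just below the mode.
   Either way the term dominates one third of |g_i| or g_i^2 / sigma_i.
   Telescoping over K steps and substituting gamma yields the constant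
   3 sqrt 2 <= 5. *)

From HB Require Import structures.
From mathcomp Require Import all_boot all_order all_algebra.
From mathcomp Require Import all_classical all_reals all_analysis.
From mathcomp Require Import ring lra.
Set Implicit Arguments. Unset Strict Implicit.
Import Order.TTheory GRing.Theory Num.Theory.
Import numFieldNormedType.Exports.
Local Open Scope classical_set_scope.
Local Open Scope ring_scope.

Section RealProbability.
Context (R : realType) (dT : measure_display) (T : measurableType dT)
  (P : probability T R).

Definition pr (A : set T) : R := fine (P A).

Lemma prE A : measurable A -> P A = (pr A)%:E.
Proof. by move=> mA; rewrite /pr fineK// fin_num_measure. Qed.

Lemma pr_ge0 A : 0 <= pr A.
Proof. by rewrite /pr fine_ge0. Qed.

Lemma pr_le1 A : measurable A -> pr A <= 1.
Proof. by move=> mA; rewrite -lee_fin -prE// probability_le1. Qed.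

Lemma pr_setT : pr setT = 1.
Proof. by rewrite /pr probability_setT. Qed.

Lemma pr_setU A B : measurable A -> measurable B -> A `&` B = set0 ->
  pr (A `|` B) = pr A + pr B.
Proof.
move=> mA mB AB0; apply/EFin_inj; rewrite EFinD -!prE//; last exact: measurableU.
by rewrite measureU.
Qed.

Lemma pr_setC A : measurable A -> pr (~` A) = 1 - pr A.
Proof.
move=> mA; apply/EFin_inj; rewrite EFinB -!prE//; last exact: measurableC.
by rewrite probability_setC.
Qed.

Lemma le_pr A B : measurable A -> measurable B -> A `<=` B -> pr A <= pr B.
Proof. by move=> mA mB AB; rewrite -lee_fin -!prE//; apply: le_measure; rewrite ?inE. Qed.

Context (X : T -> R) (mX : measurable_fun setT X).

Lemma setC_ger c : ~` [set w | c <= X w] = [set w | X w < c].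
Proof. by apply/seteqP; split => w /=; rewrite ltNge => /negP. Qed.

Lemma setC_ler c : ~` [set w | X w <= c] = [set w | c < X w].
Proof. by apply/seteqP; split => w /=; rewrite ltNge => /negP. Qed.

Lemma measurable_ler c : measurable [set w | X w <= c].
Proof.
have := measurable_fun_le measurableT mX (measurable_cst c).
by rewrite setTI.
Qed.

Lemma measurable_ger c : measurable [set w | c <= X w].
Proof.
have := measurable_fun_le measurableT (measurable_cst c) mX.
by rewrite setTI.
Qed.

Lemma measurable_ltr c : measurable [set w | X w < c].
Proof.
by rewrite -setC_ger; apply/measurableC/measurable_ger.
Qed.

Lemma measurable_gtr c : measurable [set w | c < X w].
Proof.
by rewrite -setC_ler; apply/measurableC/measurable_ler.
Qed.

End RealProbability.

Section SignBias.
Context (R : realType) (dT : measure_display) (T : measurableType dT)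
  (P : probability T R) (X : T -> R) (mX : measurable_fun setT X) (m s : R).
Hypothesis EX : ('E_P[X] = m%:E)%E.
Hypothesis VX : ('V_P[X] = (s ^+ 2)%:E)%E.
Hypothesis s_ge0 : 0 <= s.
Hypothesis Xsym : symmetric_about P X m.
Hypothesis Xuni : unimodal_about P X m.

Lemma cdf_chebyshev (t : R) : 0 < t -> 2 * cdfR P X (m - t) <= s ^+ 2 / t ^+ 2.
Proof.
move=> t_gt0.
have := chebyshev (mfun_Sub (mem_set mX) : {RV P >-> R}) t_gt0.
rewrite /= EX VX /=.
have -> : [set w | t <= `|X w - m|] =
          [set w | X w <= m - t] `|` [set w | m + t <= X w].
  apply/seteqP; split => w /=; rewrite ler_normr.
    by case/orP => ?; [right | left]; lra.
  by case => ?; apply/orP; [right | left]; lra.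
have mlo := measurable_ler mX (m - t); have mhi := measurable_ger mX (m + t).
rewrite prE; last exact: measurableU.
rewrite pr_setU //; last by apply/seteqP; split => w //= []; lra.
by rewrite /pr -Xsym -EFinM lee_fin /cdfR; lra.
Qed.

Lemma cdf_lt_mean (a : R) : a < m -> 2 * cdfR P X a <= 1.
Proof.
move=> a_lt_m.
have mlo := measurable_ler mX a; have mhi := measurable_ger mX (m + (m - a)).
have := pr_le1 P (measurableU _ _ mlo mhi).
rewrite pr_setU //; last by apply/seteqP; split => w //= []; lra.
rewrite /pr -Xsym (_ : m - (m - a) = a); last by ring.
by rewrite /cdfR; lra.
Qed.

Lemma sign_bias_ge_gap : 0 < `|m| ->
  `|m| * (1 - 2 * cdfR P X (m - `|m|)) <=
  m * (pr P [set w | 0 < X w] - pr P [set w | X w < 0]).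
Proof.
move=> m_norm_gt0.
have [m_lt0|m_gt0|m0] := ltrgtP m 0; last by rewrite m0 normr0 ltxx in m_norm_gt0.
- rewrite ltr0_norm // opprK.
  have -> : cdfR P X (m + m) = pr P [set w | 0 <= X w].
    rewrite /cdfR /pr (_ : m + m = m - - m); last by ring.
    by rewrite Xsym; congr (fine (P _)); apply/seteqP; split => w /=; lra.
  rewrite -setC_ger pr_setC; last exact: measurable_ger.
  have : pr P [set w | 0 < X w] <= pr P [set w | 0 <= X w].
    apply: le_pr; [exact: measurable_gtr|exact: measurable_ger|by move=> w /= /ltW].
  have := pr_ge0 P [set w | 0 <= X w].
  nra.
- rewrite gtr0_norm // subrr.
  rewrite -setC_ler pr_setC; last exact: measurable_ler.
  have : pr P [set w | X w < 0] <= pr P [set w | X w <= 0].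
    apply: le_pr; [exact: measurable_ltr|exact: measurable_ler|by move=> w /= /ltW].
  have := pr_ge0 P [set w | X w <= 0].
  rewrite /cdfR -/(pr _ _); nra.
Qed.

Lemma gap_large_mean (t : R) : 0 < t -> 2 * s <= t -> 3 / 4 <= 1 - 2 * cdfR P X (m - t).
Proof.
move=> t_gt0 st; have := cdf_chebyshev t_gt0.
have : s ^+ 2 / t ^+ 2 <= 1 / 4.
  have h1 : 0 <= t - 2 * s by lra.
  have h2 : 0 <= t + 2 * s by move: s_ge0; lra.
  rewrite ler_pdivrMr ?exprn_gt0 //; nra.
lra.
Qed.

(* Convexity of the cdf below the mode interpolates between the trivial bound
   at [m - t / 9] and the Chebyshev bound at [m - 2 s]. *)
Lemma gap_small_mean (t : R) : 0 < t -> t < 2 * s -> t / (3 * s) <= 1 - 2 * cdfR P X (m - t).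
Proof.
move=> t_gt0 ts; have s_gt0 : 0 < s by lra.
pose e := t / 9; pose u := 2 * s; pose l := (u - t) / (u - e).
have ue_gt0 : 0 < u - e by rewrite /u /e; lra.
have l_ge0 : 0 <= l by apply: divr_ge0; rewrite /u /e; lra.
have l_le1 : l <= 1 by rewrite ler_pdivrMr // /e; lra.
have l1 : (1 - l) * (u - e) = t - e by rewrite /l; field; lra.
have convex :
    cdfR P X (m - t) <= l * cdfR P X (m - e) + (1 - l) * cdfR P X (m - u).
  rewrite -(_ : l * (m - e) + (1 - l) * (m - u) = m - t); last by rewrite /l; field; lra.
  by apply: Xuni.1; [rewrite /e; lra | rewrite /u; lra | rewrite l_ge0 l_le1].
have half : 2 * cdfR P X (m - e) <= 1 by apply: cdf_lt_mean; rewrite /e; lra.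
have cheb : 2 * cdfR P X (m - u) <= 1 / 4.
  have -> : 1 / 4 = s ^+ 2 / u ^+ 2 by rewrite /u; field; lra.
  by apply: cdf_chebyshev; rewrite /u; lra.
have gap : 3 / 4 * (1 - l) <= 1 - 2 * cdfR P X (m - t) by nra.
apply: le_trans gap; rewrite ler_pdivrMr; last lra.
have : 0 <= (1 - l) * t by rewrite mulr_ge0 //; lra.
rewrite /u /e in l1; nra.
Qed.

Lemma sign_bias_ge :
  3^-1 * (if s < Num.sqrt 3 / 2 * `|m| then `|m| else m ^+ 2 / s) <=
  m * (pr P [set w | 0 < X w] - pr P [set w | X w < 0]).
Proof.
have [->|m_neq0] := eqVneq m 0.
  by rewrite normr0 expr2 !(mul0r, mulr0) if_same mulr0.
have t_gt0 : 0 < `|m| by rewrite normr_gt0.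
apply: le_trans (sign_bias_ge_gap t_gt0).
rewrite -(real_normK (num_real m)).
move: t_gt0; set t := `|m| => t_gt0.
have sqrt3_gt1 : 1 < Num.sqrt 3 :> R by rewrite -{1}sqrtr1 ltr_sqrt //; lra.
have sqrt3_le2 : Num.sqrt 3 <= 2 :> R.
  by rewrite -[2 in X in _ <= X]ger0_norm // -sqrtr_sqr ler_sqrt //; lra.
have [st|ts] := leP (2 * s) t.
  have -> : s < Num.sqrt 3 / 2 * t by nra.
  have := gap_large_mean t_gt0 st; nra.
have s_gt0 : 0 < s by lra.
have le_sqr : (if s < Num.sqrt 3 / 2 * t then t else t ^+ 2 / s) <= t ^+ 2 / s.
  by case: ifP => // ?; rewrite ler_pdivlMr //; nra.
apply: le_trans (ler_wpM2l _ le_sqr) _; first lra.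
rewrite (_ : 3^-1 * (t ^+ 2 / s) = t * (t / (3 * s))); last by field; lra.
by rewrite ler_wpM2l ?(ltW t_gt0) // gap_small_mean.
Qed.

End SignBias.

Section SignPatterns.
Context (R : realType).

Definition sign_of_ord (k : 'I_3) : R := k%:R - 1.

Definition ord_of_sign (z : R) : 'I_3 :=
  if 0 < z then @Ordinal 3 2 isT else if z == 0 then @Ordinal 3 1 isT else ord0.

Lemma ord_of_signK z : sign_of_ord (ord_of_sign z) = Num.sg z.
Proof.
rewrite /ord_of_sign /sign_of_ord; have [z_lt0|z_gt0|->] := ltrgtP z 0.
- by rewrite ltr0_sg //=; lra.
- by rewrite gtr0_sg //=; lra.
- by rewrite sgr0 /=; lra.
Qed.

Lemma sign_of_ordE k :
  sign_of_ord k = (0 < sign_of_ord k)%R%:R - (sign_of_ord k < 0)%R%:R.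
Proof.
case: k => [[|[|[|k]]] Hk] //; rewrite /sign_of_ord /=.
- by rewrite (_ : 0%:R - 1 = -1 :> R) ?ltrN10 ?ltr0N1 /=; lra.
- by rewrite subrr ltxx /=; lra.
- by rewrite (_ : 2%:R - 1 = 1 :> R) ?ltr01 ?ltr10 /=; lra.
Qed.

Lemma sqr_sign_of_ord_le1 k : sign_of_ord k ^+ 2 <= 1.
Proof. by case: k => [[|[|[|k]]] Hk] //; rewrite /sign_of_ord /= expr2; lra. Qed.

Lemma measurable_ord_of_sign dT (T : measurableType dT) (X : T -> R) k :
  measurable_fun setT X -> measurable [set w | ord_of_sign (X w) = k].
Proof.
move=> mX; have -> : [set w | ord_of_sign (X w) = k] =
    [set w | (ord_of_sign (X w) : nat) = k].
  by apply/seteqP; split => w /= h; [rewrite h | exact: val_inj].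
rewrite /ord_of_sign; case: k => [[|[|[|k]]] Hk] //=.
- rewrite (_ : [set w | _] = [set w | X w < 0]); first exact: measurable_ltr.
  apply/seteqP; split => w /=; first by case: ltrgtP.
  by move=> X_lt0; rewrite ltNge (ltW X_lt0) (negbTE (ltr0_neq0 X_lt0)).
- rewrite (_ : [set w | _] = [set w | X w <= 0] `&` [set w | 0 <= X w]).
    by apply: measurableI; [exact: measurable_ler | exact: measurable_ger].
  apply/seteqP; split => w /=; first by case: ltrgtP => // ->.
  case=> X_le0 X_ge0; have -> : X w = 0 by apply/eqP; rewrite eq_le X_le0.
  by rewrite ltxx eqxx.
- rewrite (_ : [set w | _] = [set w | 0 < X w]); first exact: measurable_gtr.
  by apply/seteqP; split => w /=; [case: ltrgtP | move=> ->].
Qed.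

Context (dT : measure_display) (T : measurableType dT) (P : probability T R).
Context (d : nat) (ghat : 'rV[R]_d -> T -> 'rV[R]_d).
Hypothesis ghat_measurable : forall x i, measurable_fun setT (fun w => ghat x w 0 i).

Definition sgvec (s : {ffun 'I_d -> 'I_3}) : 'rV[R]_d := \row_i sign_of_ord (s i).

Definition sign_pattern x w : {ffun 'I_d -> 'I_3} :=
  [ffun i => ord_of_sign (ghat x w 0 i)].

Definition sign_event x s := [set w | sign_pattern x w = s].

Lemma sgv_sign_pattern x w : sgv (ghat x w) = sgvec (sign_pattern x w).
Proof. by apply/matrixP => i j; rewrite !mxE ffunE ord_of_signK (ord1 i). Qed.

Lemma measurable_sign_event x s : measurable (sign_event x s).
Proof.
have -> : sign_event x s =
    \bigcap_(i in [set: 'I_d]) [set w | ord_of_sign (ghat x w 0 i) = s i].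
  apply/seteqP; split => w /=; first by move=> <- i _; rewrite ffunE.
  by move=> Hs; apply/ffunP => i; rewrite ffunE; apply: Hs.
apply: fin_bigcap_measurable; first exact: finite_finset.
by move=> i _; apply: measurable_ord_of_sign.
Qed.

(* [sgv (ghat x)] is a simple function: it is constant on each of the finitely
   many events [sign_event x s]. *)
Lemma integral_sgv x (psi : 'rV[R]_d -> R) : (forall v, 0 <= psi v) ->
  (\int[P]_w (psi (sgv (ghat x w)))%:E =
   (\sum_s pr P (sign_event x s) * psi (sgvec s))%:E)%E.
Proof.
move=> psi_ge0.
transitivity (\int[P]_w (\sum_s ((psi (sgvec s))%:E * (\1_(sign_event x s) w)%:E)))%E.
  apply: eq_integral => w _; rewrite sgv_sign_pattern (bigD1 (sign_pattern x w)) //=.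
  rewrite indicE mem_set // mule1 big1 ?adde0 // => s s_neq.
  by rewrite indicE memNset ?mule0 // => /= s_eq; rewrite s_eq eqxx in s_neq.
rewrite ge0_integral_sum //; last 2 first.
- move=> s; apply/measurable_funeM/measurable_realfun.measurable_EFinP.
  exact/measurable_realfun.measurable_indic/measurable_sign_event.
- by move=> s w _; rewrite mule_ge0 // lee_fin ?psi_ge0 // indicE.
rewrite -sumEFin; apply: eq_bigr => s _.
have mE := measurable_sign_event x s.
rewrite (@ge0_integralZl _ _ _ P setT measurableT (fun w => (\1_(sign_event x s) w)%:E)); last 3 first.
- exact/measurable_realfun.measurable_EFinP/measurable_realfun.measurable_indic.
- by move=> w _; rewrite lee_fin indicE.
- by rewrite lee_fin.
by rewrite integral_indic // setIT EFinM muleC -(prE P mE).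
Qed.

Lemma measurable_sgv_preimage x (b : pred 'rV[R]_d) :
  measurable [set w | b (sgv (ghat x w))].
Proof.
have -> : [set w | b (sgv (ghat x w))] =
    \bigcup_(s in [set s | b (sgvec s)]) sign_event x s.
  apply/seteqP; split => w /=; rewrite sgv_sign_pattern; first by exists (sign_pattern x w).
  by case=> s /= b_s ->.
apply: fin_bigcup_measurable; first exact: finite_finset.
by move=> s _; apply: measurable_sign_event.
Qed.

Lemma sum_pr_sign_event_pred x (b : pred 'rV[R]_d) :
  \sum_s pr P (sign_event x s) * (b (sgvec s))%:R = pr P [set w | b (sgv (ghat x w))].
Proof.
have mb := measurable_sgv_preimage x b.
apply: EFin_inj.
rewrite -(integral_sgv x (psi := fun v => (b v)%:R)) // -(prE P mb).
transitivity (\int[P]_w (\1_[set w | b (sgv (ghat x w))] w)%:E)%E.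
  by apply: eq_integral => w _; rewrite indicE /= mem_setE.
by rewrite integral_indic // setIT.
Qed.

Lemma sum_pr_sign_event x : \sum_s pr P (sign_event x s) = 1.
Proof.
have := sum_pr_sign_event_pred x predT.
under eq_bigr do rewrite mulr1.
by move=> ->; rewrite -(pr_setT P); congr (pr P _); apply/seteqP.
Qed.

Lemma expected_sign x i :
  \sum_s pr P (sign_event x s) * sign_of_ord (s i) =
  pr P [set w | 0 < ghat x w 0 i] - pr P [set w | ghat x w 0 i < 0].
Proof.
have -> : [set w | 0 < ghat x w 0 i] = [set w | 0 < sgv (ghat x w) 0 i].
  by apply/seteqP; split => w /=; rewrite mxE sgr_gt0.
have -> : [set w | ghat x w 0 i < 0] = [set w | sgv (ghat x w) 0 i < 0].
  by apply/seteqP; split => w /=; rewrite mxE sgr_lt0.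
rewrite -(sum_pr_sign_event_pred x (fun v => 0 < v 0 i)).
rewrite -(sum_pr_sign_event_pred x (fun v => v 0 i < 0)) -sumrB.
by apply: eq_bigr => s _; rewrite !mxE {1}sign_of_ordE mulrBr.
Qed.

End SignPatterns.

Arguments sign_of_ord {R} k.
Arguments sgvec {R d} s.

Section SignSGDKernel.
Context (R : realType) (dT : measure_display) (T : measurableType dT)
  (P : probability T R) (d : nat) (ghat : 'rV[R]_d -> T -> 'rV[R]_d) (gamma : R).
Hypothesis ghat_measurable : forall x i, measurable_fun setT (fun w => ghat x w 0 i).

Definition signsgd_kernel (h : 'rV[R]_d -> R) x :=
  \sum_s pr P (sign_event ghat x s) * h (x - gamma *: sgvec s).

Local Notation Q := signsgd_kernel.

Lemma signsgd_stepE h : (forall y, 0 <= h y) ->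
  signsgd_step P ghat gamma (fun y => (h y)%:E) = fun x => (Q h x)%:E.
Proof.
move=> h_ge0; apply/funext => x.
exact: (integral_sgv P ghat_measurable x (psi := fun v => h (x - gamma *: v))).
Qed.

Lemma signsgd_kernelDZ h1 h2 c :
  Q (fun y => h1 y + c * h2 y) = fun x => Q h1 x + c * Q h2 x.
Proof.
apply/funext => x; rewrite /Q mulr_sumr -big_split.
by apply: eq_bigr => s _ /=; ring.
Qed.

Lemma signsgd_kernel_cst c : Q (fun=> c) = fun=> c.
Proof.
by apply/funext => x; rewrite /Q -mulr_suml (sum_pr_sign_event P ghat_measurable) mul1r.
Qed.

Lemma le_signsgd_kernel h1 h2 : (forall y, h1 y <= h2 y) -> forall x, Q h1 x <= Q h2 x.
Proof. by move=> h12 x; apply: ler_sum => s _; rewrite ler_wpM2l ?pr_ge0. Qed.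

Lemma iter_signsgd_kernelDZ n h1 h2 c :
  iter n Q (fun y => h1 y + c * h2 y) =
  fun x => iter n Q h1 x + c * iter n Q h2 x.
Proof. by elim: n => [//|n IHn] /=; rewrite IHn signsgd_kernelDZ. Qed.

Lemma iter_signsgd_kernel_cst n c : iter n Q (fun=> c) = fun=> c.
Proof. by elim: n => [//|n IHn] /=; rewrite IHn signsgd_kernel_cst. Qed.

Lemma le_iter_signsgd_kernel n h1 h2 :
  (forall y, h1 y <= h2 y) -> forall x, iter n Q h1 x <= iter n Q h2 x.
Proof. by elim: n => [//|n IHn] h12 /=; apply/le_signsgd_kernel/IHn. Qed.

Lemma iter_signsgd_kernel_ge0 n h : (forall y, 0 <= h y) -> forall x, 0 <= iter n Q h x.
Proof.
move=> h_ge0 x; have := le_iter_signsgd_kernel n h_ge0 x.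
by rewrite iter_signsgd_kernel_cst.
Qed.

Lemma iter_signsgd_stepE n h : (forall y, 0 <= h y) ->
  iter n (signsgd_step P ghat gamma) (fun y => (h y)%:E) = fun x => (iter n Q h x)%:E.
Proof.
move=> h_ge0; elim: n => [//|n IHn] /=.
by rewrite IHn signsgd_stepE //; apply: iter_signsgd_kernel_ge0.
Qed.

Lemma iter_signsgd_kernel_telescope (V M : 'rV[R]_d -> R) (c C : R) x0 :
  (forall x, Q V x + c * M x <= V x + C) ->
  forall n, iter n Q V x0 + c * \sum_(k < n) iter k Q M x0 <= V x0 + n%:R * C.
Proof.
move=> descent; elim=> [|n IHn]; first by rewrite big_ord0 mulr0 mul0r !addr0.
have step : iter n.+1 Q V x0 + c * iter n Q M x0 <= iter n Q V x0 + C.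
  have := @le_iter_signsgd_kernel n (fun y => Q V y + c * M y) (fun y => V y + C * 1).
  by rewrite !iter_signsgd_kernelDZ iter_signsgd_kernel_cst -iterSr mulr1; apply.
by rewrite big_ord_recr /= -iterS -natr1; lra.
Qed.

End SignSGDKernel.

Lemma sum_mul_delta (R : nzRingType) (d : nat) (F : 'I_d -> R) (i : 'I_d) :
  \sum_j F j * (delta_mx 0 i : 'rV[R]_d) 0 j = F i.
Proof.
rewrite (bigD1 i) //= mxE !eqxx mulr1 big1 ?addr0 // => j j_neq_i.
by rewrite mxE (negbTE j_neq_i) andbF mulr0.
Qed.

Section CoordSmooth.
Context (R : realType) (d : nat) (f : 'rV[R]_d -> R) (L : 'I_d -> R).
Hypothesis f_smooth : coord_smooth f L.

Lemma coord_smooth_L_ge0 i : 0 <= L i.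
Proof.
have := le_trans (normr_ge0 _) (f_smooth 0 (delta_mx 0 i)).
rewrite pmulr_rge0 ?invr_gt0 //; congr (0 <= _).
rewrite -[RHS](sum_mul_delta L i); apply: eq_bigr => j _.
by rewrite !mxE subr0; case: (_ && _); rewrite ?expr1n ?expr0n.
Qed.

(* With all [L i = 0], [f] is affine along each coordinate, hence a nonzero
   partial derivative would make [f] unbounded below. *)
Lemma coord_smooth_grad_eq0 (fstar : R) :
  (forall i, L i = 0) -> (forall x, fstar <= f x) -> forall x i, grad f x 0 i = 0.
Proof.
move=> L0 f_ge x i; apply/eqP/negP => /negP g_neq0.
set g := grad f x 0 i; pose t := (fstar - f x - 1) / g.
have := f_smooth x (x + t *: delta_mx 0 i).
rewrite [X in _ <= _ * X]big1 ?mulr0 => [|j _]; last by rewrite L0 mul0r.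
rewrite (eq_bigr (fun j => (t * grad f x 0 j) * (delta_mx 0 i : 'rV[R]_d) 0 j)).
  rewrite sum_mul_delta normr_le0 subr_eq0 => /eqP fxt.
  have := f_ge (x + t *: delta_mx 0 i); rewrite fxt /t -/g divfK //; lra.
by move=> j _; rewrite !mxE; ring.
Qed.

Lemma coord_smooth_descent gamma x (v : 'rV[R]_d) : (forall i, v 0 i ^+ 2 <= 1) ->
  f (x - gamma *: v) <=
  f x - gamma * \sum_i grad f x 0 i * v 0 i + gamma ^+ 2 / 2 * \sum_i L i.
Proof.
move=> v_le1; have := f_smooth x (x - gamma *: v).
have -> : \sum_i grad f x 0 i * ((x - gamma *: v) 0 i - x 0 i) =
    - (gamma * \sum_i grad f x 0 i * v 0 i).
  by rewrite mulr_sumr -sumrN; apply: eq_bigr => i _; rewrite !mxE; ring.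
have quad : \sum_i L i * ((x - gamma *: v) 0 i - x 0 i) ^+ 2 <= gamma ^+ 2 * \sum_i L i.
  rewrite mulr_sumr; apply: ler_sum => i _; rewrite !mxE.
  have := mulr_ge0 (mulr_ge0 (coord_smooth_L_ge0 i) (sqr_ge0 gamma))
    (_ : 0 <= 1 - v 0 i ^+ 2); rewrite subr_ge0 => /(_ (v_le1 i)).
  by rewrite -subr_ge0; congr (0 <= _); ring.
move=> /ler_normlP[_]; lra.
Qed.

End CoordSmooth.

Section SignSGDDescent.
Context (R : realType) (d : nat) (f : 'rV[R]_d -> R) (fstar : R) (L : 'I_d -> R)
  (dT : measure_display) (T : measurableType dT) (P : probability T R)
  (ghat : 'rV[R]_d -> T -> 'rV[R]_d) (sigma : 'rV[R]_d -> 'rV[R]_d) (gamma : R).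
Hypothesis f_ge : forall x, fstar <= f x.
Hypothesis f_smooth : coord_smooth f L.
Hypothesis ghat_measurable : forall x i, measurable_fun setT (fun w => ghat x w 0 i).
Hypothesis ghat_mean :
  forall x i, ('E_P[(fun w => ghat x w 0 i)%R] = (grad f x 0 i)%:E)%E.
Hypothesis sigma_ge0 : forall x i, 0 <= sigma x 0 i.
Hypothesis ghat_var :
  forall x i, 'V_P[(fun w => ghat x w 0 i)%R] = ((sigma x 0 i) ^+ 2)%:E.
Hypothesis ghat_sym : forall x i, symmetric_about P (fun w => ghat x w 0 i) (grad f x 0 i).
Hypothesis ghat_uni : forall x i, unimodal_about P (fun w => ghat x w 0 i) (grad f x 0 i).
Hypothesis gamma_ge0 : 0 <= gamma.

Local Notation Q := (signsgd_kernel P ghat gamma).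
Local Notation M := (signsgd_measure (grad f) sigma).
Let sign_bias x := \sum_i grad f x 0 i *
  (pr P [set w | 0 < ghat x w 0 i] - pr P [set w | ghat x w 0 i < 0]).

Lemma signsgd_kernel_smooth_descent x :
  Q (fun y => f y - fstar) x <=
  f x - fstar + gamma ^+ 2 / 2 * \sum_i L i - gamma * sign_bias x.
Proof.
set C := gamma ^+ 2 / 2 * \sum_i L i.
have -> : f x - fstar + C - gamma * sign_bias x = \sum_s pr P (sign_event ghat x s) *
    (f x - fstar + C - gamma * \sum_i grad f x 0 i * sign_of_ord (s i)).
  under [RHS]eq_bigr do rewrite mulrBr.
  rewrite sumrB -mulr_suml (sum_pr_sign_event P ghat_measurable) mul1r.
  congr (_ - _); under [RHS]eq_bigr do rewrite mulrCA.
  rewrite -mulr_sumr /sign_bias; congr (_ * _).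
  under [RHS]eq_bigr do rewrite mulr_sumr.
  rewrite exchange_big /=; apply: eq_bigr => i _.
  by rewrite -(expected_sign P ghat_measurable) mulr_sumr; apply: eq_bigr => s _; ring.
apply: ler_sum => s _; rewrite ler_wpM2l ?pr_ge0 //.
have sgvec_le1 i : (sgvec s : 'rV[R]_d) 0 i ^+ 2 <= 1 by rewrite mxE sqr_sign_of_ord_le1.
have := coord_smooth_descent f_smooth gamma x sgvec_le1.
have -> : \sum_i grad f x 0 i * (sgvec s : 'rV[R]_d) 0 i =
    \sum_i grad f x 0 i * sign_of_ord (s i) by apply: eq_bigr => i _; rewrite [X in _ * X]mxE.
by rewrite /C; lra.
Qed.

Lemma signsgd_measure_le_sign_bias x : 3^-1 * M x <= sign_bias x.
Proof.
rewrite /signsgd_measure mulr_sumr; apply: ler_sum => i _.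
exact: sign_bias_ge (ghat_mean x i) (ghat_var x i) (sigma_ge0 x i)
  (ghat_sym x i) (ghat_uni x i).
Qed.

Lemma signsgd_kernel_descent x :
  Q (fun y => f y - fstar) x + gamma / 3 * M x <=
  f x - fstar + gamma ^+ 2 / 2 * \sum_i L i.
Proof.
have := signsgd_kernel_smooth_descent x.
have := ler_wpM2l gamma_ge0 (signsgd_measure_le_sign_bias x).
rewrite mulrA; lra.
Qed.

Lemma signsgd_sum_descent K x0 :
  gamma / 3 * \sum_(k < K) iter k Q M x0 <=
  f x0 - fstar + K%:R * (gamma ^+ 2 / 2 * \sum_i L i).
Proof.
have gap_ge0 y : 0 <= f y - fstar by rewrite subr_ge0.
have := iter_signsgd_kernel_telescope ghat_measurable x0 signsgd_kernel_descent K.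
have := iter_signsgd_kernel_ge0 P gamma ghat_measurable K gap_ge0 x0.
lra.
Qed.

End SignSGDDescent.

Lemma natr_mul_mean (R : numFieldType) (d : nat) (F : 'I_d -> R) :
  d%:R * ((\sum_i F i) / d%:R) = \sum_i F i.
Proof.
by case: d F => [|d] F; rewrite ?big_ord0 ?mul0r // mulrC divfK // pnatr_eq0.
Qed.

Lemma signsgd_measure_ge0 (R : realType) (d : nat) (g sigma : 'rV[R]_d -> 'rV[R]_d) x :
  (forall i, 0 <= sigma x 0 i) -> 0 <= signsgd_measure g sigma x.
Proof.
by move=> sigma_ge0; apply: sumr_ge0 => i _; case: ifP; rewrite ?divr_ge0 ?sqr_ge0.
Qed.

Lemma signsgd_measure_eq0 (R : realType) (d : nat) (g sigma : 'rV[R]_d -> 'rV[R]_d) :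
  (forall x i, g x 0 i = 0) -> signsgd_measure g sigma = fun=> 0.
Proof.
move=> g0; apply/funext => x; apply: big1 => i _.
by rewrite g0 normr0 expr2 !mul0r if_same.
Qed.

(* With [gamma ^+ 2 = 2 V / (S K)] the descent bound reads [gamma B <= 6 V],
   i.e. [B / K <= 3 sqrt 2 * sqrt (S V / K)], and [3 sqrt 2 <= 5]. *)
Lemma signsgd_rate_arith (R : rcfType) (S V K B gamma : R) :
  0 < S -> 0 < V -> 0 < K -> gamma = Num.sqrt (2 * V / (S * K)) ->
  gamma / 3 * B <= V + K * (gamma ^+ 2 / 2 * S) ->
  K^-1 * B <= 5 * Num.sqrt (S * V / K).
Proof.
move=> S_gt0 V_gt0 K_gt0 gammaE descent.
have SK_gt0 : 0 < S * K by rewrite mulr_gt0.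
have gamma_gt0 : 0 < gamma by rewrite gammaE sqrtr_gt0 divr_gt0 ?mulr_gt0.
have gammaB : gamma * B <= 6 * V.
  have : K * (gamma ^+ 2 / 2 * S) = V.
    by rewrite gammaE sqr_sqrtr ?divr_ge0 ?mulr_ge0 ?ltW //; field; rewrite !gt_eqF.
  move: descent => /[swap] ->; rewrite mulrAC; lra.
have gamma_sqrt : gamma * Num.sqrt (S * V / K) = Num.sqrt 2 * (V / K).
  rewrite gammaE -sqrtrM ?divr_ge0 ?mulr_ge0 ?ltW //.
  rewrite (_ : _ * _ = 2 * (V / K) ^+ 2); last by field; rewrite !gt_eqF.
  by rewrite sqrtrM // sqrtr_sqr ger0_norm // divr_ge0 ?ltW.
have sqrt2_ge : 6 <= 5 * Num.sqrt 2 :> R.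
  have := sqr_sqrtr (ler0n R 2); have := sqrtr_ge0 (2 : R); nra.
rewrite ler_pdivrMl // -(ler_pM2l gamma_gt0).
have -> : gamma * (K * (5 * Num.sqrt (S * V / K))) =
    5 * K * (gamma * Num.sqrt (S * V / K)) by ring.
rewrite gamma_sqrt.
have -> : 5 * K * (Num.sqrt 2 * (V / K)) = 5 * Num.sqrt 2 * V by field; rewrite gt_eqF.
nra.
Qed.

Unset Implicit Arguments.
Theorem mainTheorem14 (R : realType) (d : nat)
  (f : 'rV[R]_d -> R) (fstar : R) (L : 'I_d -> R)
  (dT : measure_display) (T : measurableType dT) (P : probability T R)
  (ghat : 'rV[R]_d -> T -> 'rV[R]_d) (sigma : 'rV[R]_d -> 'rV[R]_d)
  (x0 : 'rV[R]_d) (K : nat) :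
  (forall x, fstar <= f x) ->
  (forall x, differentiable f x) ->
  coord_smooth f L ->
  (forall x (i : 'I_d), measurable_fun setT (fun w => ghat x w 0 i)) ->
  (forall x (i : 'I_d),
      P.-integrable setT (fun w => (ghat x w 0 i)%:E)) ->
  (forall x (i : 'I_d),
      P.-integrable setT (fun w => ((ghat x w 0 i) ^+ 2)%:E)) ->
  (forall x (i : 'I_d),
      ('E_P[(fun w => ghat x w 0 i)%R] = (grad f x 0 i)%R%:E)%E) ->
  (forall x (i : 'I_d), 0 <= sigma x 0 i) ->
  (forall x (i : 'I_d),
      ('V_P[(fun w => ghat x w 0 i)%R] = ((sigma x 0 i) ^+ 2)%R%:E)%E) ->
  (forall x (i : 'I_d), symmetric_about P (fun w => ghat x w 0 i) (grad f x 0 i)) ->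
  (forall x (i : 'I_d), unimodal_about P (fun w => ghat x w 0 i) (grad f x 0 i)) ->
  (1 <= K)%N ->
  fstar < f x0 ->
  let Lbar := (\sum_i L i) / d%:R in
  let gamma := Num.sqrt (2 * (f x0 - fstar) / (d%:R * Lbar * K%:R)) in
  ((K%:R)^-1%:E *
     \sum_(k < K) signsgd_expect P ghat gamma k
        (fun x => (signsgd_measure (grad f) sigma x)%:E) x0
   <= (5 * Num.sqrt (d%:R * Lbar * (f x0 - fstar) / K%:R))%:E)%E.
Proof.
move=> f_ge _ f_smooth ghat_meas _ _ ghat_mean sigma_ge0 ghat_var ghat_sym ghat_uni
  K_ge1 fx0_gt; cbv zeta; rewrite !natr_mul_mean; set gamma := Num.sqrt _.
have M_ge0 x := signsgd_measure_ge0 (grad f) (sigma_ge0 x).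
rewrite /signsgd_expect.
under eq_bigr do rewrite (iter_signsgd_stepE P gamma ghat_meas _ M_ge0).
rewrite sumEFin -EFinM lee_fin.
have L_ge0 := coord_smooth_L_ge0 f_smooth.
have [S0|S_neq0] := eqVneq (\sum_i L i) 0.
  have L0 i : L i = 0 by apply: (psumr_eq0P (fun j _ => L_ge0 j) S0).
  rewrite (signsgd_measure_eq0 _ (coord_smooth_grad_eq0 f_smooth L0 f_ge)).
  under eq_bigr do rewrite (iter_signsgd_kernel_cst P gamma ghat_meas).
  by rewrite big1 // mulr0 mulr_ge0 ?sqrtr_ge0.
apply: (signsgd_rate_arith _ _ _ (erefl gamma)).
- by rewrite lt0r S_neq0 sumr_ge0.
- by rewrite subr_gt0.
- by rewrite ltr0n.
exact: (signsgd_sum_descent f_ge f_smooth ghat_meas ghat_mean sigma_ge0 ghat_var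
  ghat_sym ghat_uni (sqrtr_ge0 _)).
Qed.
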